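(* Let $\ell\in\mathbb{N}$, $h\in\bigwedge(V_{2\ell}^* )$, let $G$ be an Eulerian graph with Eulerian orientation $\omega$ and compatible local ordering $\kappa$, and let $\phi:E(G)\to[\ell]$. Let $C$ be a $\kappa$-circuit, let $\omega'$ be obtained from $\omega$ by reversing the orientation of every edge of $C$, and let $\kappa'$ be obtained from $\kappa$ by, at each passage of $C$ through a vertex $v$ via consecutive arcs $a$ (incoming) and $a'$ (outgoing, with $\kappa_v^-(a)+1=\kappa_v^+(a')$), interchanging the labels of $a$ and $a'$ (so $\kappa'$ is compatible with $\omega'$). Then $s_{h,\phi}(G,\omega,\kappa)=s_{h,\phi}(G,\omega',\kappa')$.
   Context: Setup: $V_{2\ell}=\mathbb{C}^{2\ell}$ with standard basis $e_1,\dots,e_{2\ell}$; $f_i=-e_{i+\ell}$ for $i\le\ell$, $f_i=e_{i-\ell}$ for $i>\ell$. $\bigwedge(V_{2\ell}^* )=\bigoplus_{n=0}^{2\ell}\bigwedge^n(V_{2\ell}^* )$, and $h$ applied to an $n$-fold tensor means its skew-symmetric component $h^n$ applied to it. Graphs may have loops and multiple edges; Eulerian means every vertex has even degree. An Eulerian orientation $\omega$ makes in-degree equal out-degree at each vertex (a loop gives one incoming and one outgoing arc). A compatible local ordering $\kappa$ consists at each vertex $v$ of degree $d(v)$ of bijections $\kappa_v^-:\delta^-(v)\to\{1,3,\dots,d(v)-1\}$ and $\kappa_v^+:\delta^+(v)\to\{2,4,\dots,d(v)\}$; $\kappa_v^{-1}(i)$ is the arc at $v$ with label $i$. The $\kappa$-circuits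 are the closed walks $(v_1,a_1,\dots,a_i,v_i,a_{i+1},\dots,v_1)$ with $\kappa^-_{v_i}(a_i)+1=\kappa^+_{v_i}(a_{i+1})$ into which $\kappa$ decomposes the edge set; $c(G,\kappa)$ is their number. For $\phi:E(G)\to[\ell]$ define $s_{h,\phi}(G,\omega,\kappa)=(-1)^{c(G,\kappa)}\sum_{\psi:E(G)\to\{0,\ell\}}\prod_{v\in V(G)} h\big(\bigotimes_{i=1,3,\dots,d(v)-1} e_{(\phi+\psi)(\kappa_v^{-1}(i))}\otimes f_{(\phi+\psi)(\kappa_v^{-1}(i+1))}\big)$, where $(\phi+\psi)(e)=\phi(e)+\psi(e)$. *)

From HB Require Import structures.
From mathcomp Require Import all_boot all_order all_algebra.
Set Implicit Arguments. Unset Strict Implicit. Unset Printing Implicit Defensive.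
Import Order.TTheory GRing.Theory Num.Theory.
Local Open Scope ring_scope.

Section Defs.
Variable (l : nat) (R : numClosedFieldType).

(* V_{2l} = R^{2l} as row vectors; basis indices are 0-based (0 .. 2l-1). *)
Definition Vec := 'rV[R]_(2 * l).

Definition evec (k : nat) : Vec := \row_(j < 2 * l) ((j : nat) == k)%:R.

(* f_k : 0-based version of  f_i = -e_{i+l} (i <= l),  f_i = e_{i-l} (i > l). *)
Definition fvec (k : nat) : Vec :=
  if (k < l)%N then - evec (k + l) else evec (k - l).

Definition upd n (t : {ffun 'I_n -> Vec}) (i : 'I_n) (x : Vec) : {ffun 'I_n -> Vec} :=
  [ffun j => if j == i then x else t j].

Definition multilinear n (hn : {ffun 'I_n -> Vec} -> R) : Prop :=
  forall (t : {ffun 'I_n -> Vec}) (i : 'I_n) (a : R) (x y : Vec),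
    hn (upd t i (a *: x + y)) = a * hn (upd t i x) + hn (upd t i y).

Definition alternating n (hn : {ffun 'I_n -> Vec} -> R) : Prop :=
  forall (t : {ffun 'I_n -> Vec}) (i j : 'I_n), i != j -> t i = t j -> hn t = 0.

(* an element h of the exterior algebra of V^*: for each n its component h^n,
   an alternating n-linear form on V (automatically 0 for n > 2l). *)
Definition ext_form := forall n : nat, {ffun 'I_n -> Vec} -> R.

Definition is_ext_form (h : ext_form) : Prop :=
  forall n, multilinear (h n) /\ alternating (h n).

(* Graphs: finite vertex type V, finite edge type E, each edge e has two
   endpoints src e, tgt e (loops and multiple edges allowed).
   An orientation w : E -> bool orients e from src e to tgt e if w e,
   and from tgt e to src e otherwise. *)
Variables (V E : finType) (src tgt : E -> V).

Definition deg (v : V) : nat := (#|[pred e | src e == v]| + #|[pred e | tgt e == v]|)%N.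

Definition eulerian_graph : Prop := forall v, ~~ odd (deg v).

Definition hd (w : E -> bool) (e : E) : V := if w e then tgt e else src e.
Definition tl (w : E -> bool) (e : E) : V := if w e then src e else tgt e.

Definition eulerian_orientation (w : E -> bool) : Prop :=
  forall v, #|[pred e | hd w e == v]| = #|[pred e | tl w e == v]|.

(* A local ordering is given by kin e = kappa^-_{head e}(e) and
   kout e = kappa^+_{tail e}(e). *)
Definition compatible (w : E -> bool) (kin kout : E -> nat) : Prop :=
  forall v,
  ({in [pred e | hd w e == v] &, injective kin} /\
   (forall e, hd w e = v -> odd (kin e) /\ (kin e < deg v)%N) /\
   (forall i, odd i -> (i < deg v)%N -> exists e, hd w e = v /\ kin e = i)) /\
  ({in [pred e | tl w e == v] &, injective kout} /\
   (forall e, tl w e = v -> ~~ odd (kout e) /\ (0 < kout e <= deg v)%N) /\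
   (forall i, ~~ odd i -> (0 < i <= deg v)%N -> exists e, tl w e = v /\ kout e = i)).

Definition kinv_in (w : E -> bool) (kin : E -> nat) (v : V) (i : nat) : option E :=
  [pick e | (hd w e == v) && (kin e == i)].
Definition kinv_out (w : E -> bool) (kout : E -> nat) (v : V) (i : nat) : option E :=
  [pick e | (tl w e == v) && (kout e == i)].

(* successor map along kappa-circuits: the arc following the incoming arc e
   at its head is the outgoing arc with label kin e + 1. *)
Definition knext (w : E -> bool) (kin kout : E -> nat) (e : E) : E :=
  odflt e [pick e' | (tl w e' == hd w e) && (kout e' == (kin e).+1)].

(* c(G, kappa): number of kappa-circuits = number of orbits of knext *)
Definition ncirc (w : E -> bool) (kin kout : E -> nat) : nat :=
  fcard (knext w kin kout) (mem predT).

(* (phi + psi)(e), 0-based: phi e in {0..l-1}, psi e in {0, l} *)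
Definition lab (phi : E -> 'I_l) (psi : {ffun E -> bool}) (e : E) : nat :=
  ((phi e : nat) + (if psi e then l else 0))%N.

Definition vfactor (h : ext_form) (w : E -> bool) (kin kout : E -> nat)
    (phi : E -> 'I_l) (psi : {ffun E -> bool}) (v : V) : R :=
  h (deg v) [ffun k : 'I_(deg v) =>
     if odd k.+1 then oapp (fun e => evec (lab phi psi e)) 0 (kinv_in w kin v k.+1)
     else oapp (fun e => fvec (lab phi psi e)) 0 (kinv_out w kout v k.+1)].

Definition s_h_phi (h : ext_form) (phi : E -> 'I_l) (w : E -> bool) (kin kout : E -> nat) : R :=
  (-1) ^+ ncirc w kin kout *
  \sum_(psi : {ffun E -> bool}) \prod_(v : V) vfactor h w kin kout phi psi v.

End Defs.

From HB Require Import structures.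
From mathcomp Require Import all_boot all_order all_algebra.
From mathcomp Require Import zify.
Import Order.TTheory GRing.Theory Num.Theory.
Set Implicit Arguments. Unset Strict Implicit. Unset Printing Implicit Defensive.
Local Open Scope ring_scope.

(* Reversing C does not change the circuit decomposition: the new successor map is the inverse
   of the old one on C and the old one elsewhere.  In the state sum, each passage of C through a
   vertex makes its two arcs trade adjacent tensor slots; by alternation this costs one sign per
   arc of C, and leaves e and f exchanged on the arcs of C.  Since f_i = -e_(i+l) and
   f_(i+l) = e_i, the exchange on one arc is undone by toggling psi there, at the cost of one
   more sign per arc, so the signs cancel. *)

Definition pairswap (Q : pred nat) (k : nat) : nat :=
  if Q k./2 then (if odd k then k.-1 else k.+1) else k.

Section AlternatingForm.
Variables (l : nat) (R : numClosedFieldType) (n : nat).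
Variable f : {ffun 'I_n -> Vec l R} -> R.
Hypotheses (f_lin : multilinear f) (f_alt : alternating f).

Lemma upd_id (t : {ffun 'I_n -> Vec l R}) i : upd t i (t i) = t.
Proof. by apply/ffunP=> j; rewrite ffunE; case: eqP => // ->. Qed.

Lemma updC (t : {ffun 'I_n -> Vec l R}) i j x y : i != j ->
  upd (upd t i x) j y = upd (upd t j y) i x.
Proof.
move=> ij; apply/ffunP=> k; rewrite !ffunE; case: (eqVneq k j) => // ->.
by rewrite eq_sym (negbTE ij).
Qed.

Lemma form_updD t i x y : f (upd t i (x + y)) = f (upd t i x) + f (upd t i y).
Proof. by have := f_lin t i 1 x y; rewrite scale1r mul1r. Qed.

Lemma form_updZ t i a x : f (upd t i (a *: x)) = a * f (upd t i x).
Proof.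
have f0 : f (upd t i 0) = 0.
  by apply: (@addrI _ (f (upd t i 0))); rewrite -form_updD !addr0.
by have := f_lin t i a x 0; rewrite f0 !addr0.
Qed.

Lemma form_updN t i : f (upd t i (- t i)) = - f t.
Proof. by rewrite -scaleN1r form_updZ upd_id mulN1r. Qed.

Lemma form_swap t i j : i != j -> f (upd (upd t i (t j)) j (t i)) = - f t.
Proof.
move=> ij; pose g x y := f (upd (upd t i x) j y).
have g_diag x : g x x = 0.
  by rewrite /g; apply: (f_alt ij); rewrite !ffunE !eqxx (negbTE ij).
have gDl x y z : g (x + y) z = g x z + g y z by rewrite /g !(updC _ _ _ ij) form_updD.
have gDr x y z : g z (x + y) = g z x + g z y by rewrite /g form_updD.
have := g_diag (t i + t j); rewrite gDl !gDr !g_diag add0r addr0 => /eqP.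
rewrite addr_eq0 => /eqP g_anti.
have -> : f t = g (t i) (t j) by rewrite /g !upd_id.
by rewrite g_anti opprK.
Qed.

Lemma form_pairswap (t : nat -> Vec l R) (Q : pred nat) : ~~ odd n ->
  f [ffun k : 'I_n => t (pairswap Q k)] =
  (-1) ^+ count Q (iota 0 n./2) * f [ffun k : 'I_n => t k].
Proof.
move=> even_n; pose Qb b := [pred j | (j < b)%N && Q j].
suff IH b : (b <= n./2)%N -> f [ffun k : 'I_n => t (pairswap (Qb b) k)] =
    (-1) ^+ count Q (iota 0 b) * f [ffun k : 'I_n => t k].
  rewrite -IH //; congr f; apply/ffunP=> k; rewrite !ffunE /pairswap /=.
  by rewrite ltn_half_double even_halfK // ltn_ord.
elim: b => [|b IHb] le_b.
  by rewrite expr0 mul1r; congr f; apply/ffunP=> k; rewrite !ffunE.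
rewrite -[in iota 0 b.+1]addn1 iotaD count_cat /= addn0 exprD mulrAC -IHb; last by lia.
have QbS j : Qb b.+1 j = (j == b) && Q b || Qb b j.
  by rewrite /= ltnS leq_eqVlt andb_orl; case: eqP => // ->.
have [Qb_true|Qb_false] := boolP (Q b); last first.
  rewrite expr0 mulr1; congr f; apply/ffunP=> k; rewrite !ffunE /pairswap.
  by rewrite QbS (negbTE Qb_false) andbF.
have lt_b : (b.*2.+1 < n)%N by move: le_b; rewrite -leq_double doubleS even_halfK.
pose i := Ordinal (ltnW lt_b); pose j := Ordinal lt_b.
have ij : i != j by rewrite -val_eqE /= neq_ltn ltnSn.
rewrite expr1 mulrN1 -(form_swap _ ij); congr f; apply/ffunP=> k; rewrite !ffunE.
have i2 : (i./2 = b)%N by rewrite /= doubleK.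
have j2 : (j./2 = b)%N by rewrite /= uphalf_double.
rewrite /pairswap QbS i2 j2 /= ltnn.
case: (eqVneq k j) => [->|kj]; first by rewrite j2 eqxx Qb_true /= odd_double.
case: (eqVneq k i) => [->|ki]; first by rewrite i2 eqxx Qb_true /= odd_double.
suff /negbTE-> : k./2 != b by [].
apply: contra_neq kj => k2; apply/val_inj => /=.
have := odd_double_half k; rewrite k2; case: (odd k) => //= kE.
by move: ki; rewrite -val_eqE /= -kE add0n eqxx.
Qed.

End AlternatingForm.

Lemma prod_ext_form_opp_entry l (R : numClosedFieldType) (h : ext_form l R)
    (V : finType) (d : V -> nat) (c c' : V -> nat -> Vec l R) v0 k0 :
  is_ext_form h -> (k0 < d v0)%N ->
  (forall v k, (k < d v)%N -> c v k = (if (v == v0) && (k == k0) then -1 else 1) *: c' v k) ->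
  \prod_v h (d v) [ffun k : 'I_(d v) => c v k] =
  - \prod_v h (d v) [ffun k : 'I_(d v) => c' v k].
Proof.
move=> Hh lt_k0 cE; rewrite (bigD1 v0) //= [in RHS](bigD1 v0) //= -mulNr; congr (_ * _).
  rewrite -(form_updN (Hh _).1 _ (Ordinal lt_k0)); congr (h _ _); apply/ffunP=> k.
  rewrite !ffunE cE // eqxx /=; case: (eqVneq k (Ordinal lt_k0)) => [->|kk].
    by rewrite eqxx scaleN1r.
  by move: kk; rewrite -val_eqE => /negbTE->; rewrite scale1r.
apply: eq_bigr=> v /negbTE vv0; congr (h _ _); apply/ffunP=> k.
by rewrite !ffunE cE // vv0 scale1r.
Qed.

Lemma pick_unique (T : finType) (P : pred T) y :
  (forall z, P z = (z == y)) -> [pick z | P z] = Some y.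
Proof. by move=> Py; case: pickP => [z|/(_ y)]; rewrite Py ?eqxx // => /eqP->. Qed.

Section LocalOrdering.
Variables (V E : finType) (src tgt : E -> V).

Lemma kinv_in_spec w kin v i y : kinv_in src tgt w kin v i = Some y ->
  hd src tgt w y = v /\ kin y = i.
Proof. by rewrite /kinv_in; case: pickP => // z /andP[/eqP hz /eqP kz] [<-]. Qed.

Lemma kinv_out_spec w kout v i y : kinv_out src tgt w kout v i = Some y ->
  tl src tgt w y = v /\ kout y = i.
Proof. by rewrite /kinv_out; case: pickP => // z /andP[/eqP hz /eqP kz] [<-]. Qed.

Variables (w : E -> bool) (kin kout : E -> nat).
Hypothesis Hk : compatible src tgt w kin kout.
Local Notation hdw := (hd src tgt w).
Local Notation tlw := (tl src tgt w).
Local Notation dg := (deg src tgt).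
Local Notation N := (knext src tgt w kin kout).

Lemma kin_inj x y : hdw x = hdw y -> kin x = kin y -> x = y.
Proof. by move=> hxy kxy; have [[inj _] _] := Hk (hdw y); apply: inj; rewrite ?inE ?hxy. Qed.

Lemma kout_inj x y : tlw x = tlw y -> kout x = kout y -> x = y.
Proof. by move=> txy kxy; have [_ [inj _]] := Hk (tlw y); apply: inj; rewrite ?inE ?txy. Qed.

Lemma kin_range e : odd (kin e) /\ (kin e < dg (hdw e))%N.
Proof. by have [[_ [rng _]] _] := Hk (hdw e); apply: rng. Qed.

Lemma kout_range e : ~~ odd (kout e) /\ (0 < kout e <= dg (tlw e))%N.
Proof. by have [_ [_ [rng _]]] := Hk (tlw e); apply: rng. Qed.

Lemma kin_surj v i : odd i -> (i < dg v)%N -> exists e, hdw e = v /\ kin e = i.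
Proof. by have [[_ [_ surj]] _] := Hk v; apply: surj. Qed.

Lemma kout_surj v i : ~~ odd i -> (0 < i <= dg v)%N -> exists e, tlw e = v /\ kout e = i.
Proof. by have [_ [_ [_ surj]]] := Hk v; apply: surj. Qed.

Lemma kin_gt0 e : (0 < kin e)%N.
Proof. by have [] := kin_range e; case: (kin e). Qed.

Lemma kinv_inE x : kinv_in src tgt w kin (hdw x) (kin x) = Some x.
Proof.
apply: pick_unique => z; apply/andP/eqP => [[/eqP hz /eqP kz]|->] //.
exact: kin_inj.
Qed.

Lemma kinv_outE x : kinv_out src tgt w kout (tlw x) (kout x) = Some x.
Proof.
apply: pick_unique => z; apply/andP/eqP => [[/eqP tz /eqP kz]|->] //.
exact: kout_inj.
Qed.

Lemma knext_spec e : tlw (N e) = hdw e /\ kout (N e) = (kin e).+1.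
Proof.
have [odd_k lt_k] := kin_range e.
have [e' [te' ke']] : exists e', tlw e' = hdw e /\ kout e' = (kin e).+1.
  by apply: kout_surj; rewrite /= ?negbK.
suff -> : N e = e' by [].
rewrite /knext (@pick_unique _ _ e') // => z /=.
apply/andP/eqP => [[/eqP tz /eqP kz]|->]; last by rewrite te' ke'.
by apply: kout_inj; rewrite ?tz ?kz.
Qed.

Lemma knext_inj : injective N.
Proof.
move=> x y Nxy; have [tx kx] := knext_spec x; have [ty ky] := knext_spec y.
by apply: kin_inj; [rewrite -tx -ty Nxy | apply/succn_inj; rewrite -kx -ky Nxy].
Qed.

Lemma kinv_out_knext v i p : kinv_in src tgt w kin v i = Some p ->
  kinv_out src tgt w kout v i.+1 = Some (N p).
Proof.
by case/kinv_in_spec=> <- <-; have [<- <-] := knext_spec p; apply: kinv_outE.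
Qed.

Section CircuitReversal.
Variable c0 : E.
Local Notation C := (fconnect N c0).
Local Notation P := (finv N).

Lemma knextK : cancel N P. Proof. exact: finv_f knext_inj. Qed.
Lemma finvK : cancel P N. Proof. exact: f_finv knext_inj. Qed.

Lemma circuit_knext e : C (N e) = C e.
Proof. by rewrite -same_fconnect1_r //; apply: knext_inj. Qed.

Lemma circuit_finv e : C (P e) = C e.
Proof. by rewrite -{2}(finvK e) circuit_knext. Qed.

Lemma hd_finv e : hdw (P e) = tlw e.
Proof. by rewrite -{2}(finvK e) (knext_spec (P e)).1. Qed.

Variables (w' : E -> bool) (kin' kout' : E -> nat).
Hypothesis Hw' : forall e, w' e = (if C e then ~~ w e else w e).
Hypothesis Hout : forall e, ~~ C e -> kin' e = kin e /\ kout' e = kout e.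
Hypothesis Hin : forall a, C a -> kout' a = kout (N a) /\ kin' (N a) = kin a.

Local Notation N' := (knext src tgt w' kin' kout').

Lemma hd_rev e : hd src tgt w' e = if C e then tlw e else hdw e.
Proof. by rewrite /hd /tl Hw'; case: (C e); case: (w e). Qed.

Lemma tl_rev e : tl src tgt w' e = if C e then hdw e else tlw e.
Proof. by rewrite /hd /tl Hw'; case: (C e); case: (w e). Qed.

Lemma kin_rev e : kin' e = if C e then kin (P e) else kin e.
Proof.
case Ce: (C e); last by rewrite (Hout (negbT Ce)).1.
by rewrite -{1}(finvK e) (Hin (etrans (circuit_finv e) Ce)).2.
Qed.

Lemma kout_rev e : kout' e = if C e then kout (N e) else kout e.
Proof. by case Ce: (C e); [rewrite (Hin Ce).1 | rewrite (Hout (negbT Ce)).2]. Qed.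

Lemma kinv_in_rev v i p : kinv_in src tgt w kin v i = Some p ->
  kinv_in src tgt w' kin' v i = Some (if C p then N p else p).
Proof.
case/kinv_in_spec=> <- <-; apply: pick_unique => z /=; rewrite hd_rev kin_rev.
have [tNp kNp] := knext_spec p.
case Cp: (C p); case Cz: (C z); apply/andP/eqP => [[/eqP hz /eqP kz]|zE].
- by rewrite -[z]finvK (@kin_inj (P z) p) // hd_finv.
- by rewrite zE knextK tNp !eqxx.
- by move: Cz; rewrite (kin_inj hz kz) Cp.
- by move: Cz; rewrite zE circuit_knext Cp.
- by move: Cp; rewrite -(@kin_inj (P z) p) ?hd_finv // circuit_finv Cz.
- by move: Cz; rewrite zE Cp.
- exact: kin_inj.
- by rewrite zE !eqxx.
Qed.

Lemma kinv_out_rev v i p : kinv_in src tgt w kin v i = Some p ->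
  kinv_out src tgt w' kout' v i.+1 = Some (if C p then p else N p).
Proof.
case/kinv_in_spec=> <- <-; apply: pick_unique => z /=; rewrite tl_rev kout_rev.
have [tNp kNp] := knext_spec p.
have eq_p : hdw z = hdw p -> kout (N z) = (kin p).+1 -> z = p.
  by move=> hz kz; apply: kin_inj hz _; apply/succn_inj; rewrite -(knext_spec z).2.
case Cp: (C p); case Cz: (C z) => /=; apply/andP/eqP => [[/eqP hz /eqP kz]|zE].
- exact: eq_p.
- by rewrite zE kNp !eqxx.
- by move: Cz; rewrite (@kout_inj z (N p)) ?tNp ?kNp // circuit_knext Cp.
- by move: Cz; rewrite zE Cp.
- by move: Cp; rewrite -(eq_p hz kz) Cz.
- by move: Cz; rewrite zE circuit_knext Cp.
- by apply: kout_inj; rewrite ?tNp ?kNp.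
- by rewrite zE tNp kNp !eqxx.
Qed.

Lemma knext_rev e : N' e = if C e then P e else N e.
Proof.
have in_e : kinv_in src tgt w kin (hd src tgt w' e) (kin' e) = Some (if C e then P e else e).
  by rewrite hd_rev kin_rev; case: (C e); rewrite -?hd_finv kinv_inE.
have := kinv_out_rev in_e; rewrite /kinv_out /knext => ->.
by case Ce: (C e); rewrite /= ?circuit_finv Ce ?finvK.
Qed.

Lemma knext_rev_inj : injective N'.
Proof.
move=> x y; rewrite !knext_rev; case Cx: (C x); case Cy: (C y).
- exact: (can_inj finvK).
- by move=> Pxy; move: Cx; rewrite -circuit_finv Pxy circuit_knext Cy.
- by move=> Nxy; move: Cy; rewrite -circuit_finv -Nxy circuit_knext Cx.
- exact: knext_inj.
Qed.

Lemma ncirc_rev : ncirc src tgt w' kin' kout' = ncirc src tgt w kin kout.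
Proof.
apply: eq_n_comp => x y; apply/idP/idP; apply: connect_sub => {}x {}y /eqP <-.
- rewrite knext_rev; case: (C x); last exact: fconnect1.
  by rewrite (fconnect_sym knext_inj) -{2}(finvK x) fconnect1.
- case Cx: (C x); last by have := fconnect1 N' x; rewrite knext_rev Cx.
  rewrite (fconnect_sym knext_rev_inj).
  by have := fconnect1 N' (N x); rewrite knext_rev circuit_knext Cx knextK.
Qed.

End CircuitReversal.
End LocalOrdering.

Lemma fvec_lt l (R : numClosedFieldType) i : (i < l)%N -> fvec l R i = - evec l R (i + l).
Proof. by rewrite /fvec => ->. Qed.

Lemma fvec_addn l (R : numClosedFieldType) i : fvec l R (i + l) = evec l R i.
Proof. by rewrite /fvec ltnNge leq_addl /= addnK. Qed.

Definition toggle (E : finType) (x : E) (psi : {ffun E -> bool}) : {ffun E -> bool} :=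
  [ffun e => if e == x then ~~ psi x else psi e].

Lemma toggleK (E : finType) (x : E) : involutive (toggle x).
Proof.
by move=> psi; apply/ffunP=> e; rewrite !ffunE; case: (eqVneq e x) => [->|]; rewrite ?eqxx ?negbK.
Qed.

Section ExchangedSums.
Variables (l : nat) (R : numClosedFieldType) (h : ext_form l R).
Arguments h : clear implicits.
Hypothesis Hh : is_ext_form h.
Variables (V E : finType) (src tgt : E -> V) (w : E -> bool) (kin kout : E -> nat).
Hypothesis Hk : compatible src tgt w kin kout.
Variable phi : E -> 'I_l.
Local Notation hdw := (hd src tgt w).
Local Notation tlw := (tl src tgt w).
Local Notation dg := (deg src tgt).

(* [entry pred0] is the tensor of [vfactor]; on the arcs of X the roles of e and f are exchanged. *)
Definition entry (X : pred E) (psi : {ffun E -> bool}) (v : V) (k : nat) : Vec l R :=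
  if odd k.+1 then
    oapp (fun e => if X e then fvec l R (lab phi psi e) else evec l R (lab phi psi e)) 0
      (kinv_in src tgt w kin v k.+1)
  else
    oapp (fun e => if X e then evec l R (lab phi psi e) else fvec l R (lab phi psi e)) 0
      (kinv_out src tgt w kout v k.+1).

Definition exchanged_sum (X : pred E) : R :=
  \sum_(psi : {ffun E -> bool}) \prod_v h (dg v) [ffun k : 'I_(dg v) => entry X psi v k].

Lemma exchanged_sum_ext X Y : X =1 Y -> exchanged_sum X = exchanged_sum Y.
Proof.
move=> XY; apply: eq_bigr => psi _; apply: eq_bigr => v _; congr (h _ _).
by apply/ffunP=> k; rewrite !ffunE /entry; case: (odd _);
  [case: kinv_in => //= e | case: kinv_out => //= e]; rewrite XY.
Qed.

(* Since f_i = -e_(i+l) and f_(i+l) = e_i, toggling psi at x compensates for exchanging e and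
   f on x at one of its two ends, and costs a sign at the other one. *)
Lemma entry_toggle X x psi v k : ~~ X x ->
  entry (predU1 x X) (toggle x psi) v k =
  (if (v == (if psi x then hdw x else tlw x)) && (k == (if psi x then kin x else kout x).-1)
   then -1 else 1) *: entry X psi v k.
Proof.
move=> Xx; have [odd_out /andP[kout_gt0 _]] := kout_range Hk x.
have in_slot : odd k.+1 -> (k == (kout x).-1) = false.
  by apply: contraTF => /eqP->; rewrite prednK.
have out_slot : ~~ odd k.+1 -> (k == (kin x).-1) = false.
  by apply: contraNF => /eqP->; rewrite (prednK (kin_gt0 Hk x)) (kin_range Hk x).1.
have lab_toggle e : e != x -> lab phi (toggle x psi) e = lab phi psi e.
  by move=> ex; rewrite /lab ffunE (negbTE ex).
have lab_x : lab phi (toggle x psi) x = if psi x then (phi x : nat) else (phi x + l)%N.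
  by rewrite /lab ffunE eqxx; case: (psi x); rewrite ?addn0.
have lab_psi : lab phi psi x = if psi x then (phi x + l)%N else (phi x : nat).
  by rewrite /lab; case: (psi x); rewrite ?addn0.
rewrite /entry /=; case: ifP => [odd_k|even_k].
- case in_k: kinv_in => [e|] /=; last by rewrite scaler0.
  have [he ke] := kinv_in_spec in_k.
  have [exx|ex] := eqVneq e x; first subst e.
    rewrite (negbTE Xx) lab_x lab_psi -he ke /=.
    case: (psi x); rewrite /= ?eqxx ?(in_slot odd_k) ?andbF ?fvec_addn ?scale1r //.
    by rewrite (fvec_lt R (ltn_ord _)) scaleN1r.
  rewrite /= lab_toggle //; case: (psi x); rewrite ?(in_slot odd_k) ?andbF ?scale1r //.
  suff /negbTE-> : ~~ ((v == hdw x) && (k == (kin x).-1)) by rewrite scale1r.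
  apply: contra ex => /andP[/eqP vx /eqP kx]; move: in_k.
  by rewrite vx kx (prednK (kin_gt0 Hk x)) (kinv_inE Hk) => -[->].
- case out_k: kinv_out => [e|] /=; last by rewrite scaler0.
  have [te ke] := kinv_out_spec out_k.
  have [exx|ex] := eqVneq e x; first subst e.
    rewrite (negbTE Xx) lab_x lab_psi -te ke /=.
    case: (psi x); rewrite /= ?eqxx ?(out_slot (negbT even_k)) ?andbF ?fvec_addn ?scale1r //.
    by rewrite (fvec_lt R (ltn_ord _)) scaleN1r opprK.
  rewrite /= lab_toggle //; case: (psi x); rewrite ?(out_slot (negbT even_k)) ?andbF ?scale1r //.
  suff /negbTE-> : ~~ ((v == tlw x) && (k == (kout x).-1)) by rewrite scale1r.
  apply: contra ex => /andP[/eqP vx /eqP kx]; move: out_k.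
  by rewrite vx kx (prednK kout_gt0) (kinv_outE Hk) => -[->].
Qed.

Lemma exchanged_sum_toggle X x : ~~ X x -> exchanged_sum (predU1 x X) = - exchanged_sum X.
Proof.
move=> Xx; rewrite /exchanged_sum (reindex_inj (inv_inj (toggleK x))) /= -sumrN.
apply: eq_bigr => psi _.
have [_ lt_in] := kin_range Hk x; have [_ /andP[kout_gt0 le_out]] := kout_range Hk x.
apply: (prod_ext_form_opp_entry (v0 := if psi x then hdw x else tlw x)
  (k0 := (if psi x then kin x else kout x).-1) Hh) => [|v k _]; last exact: entry_toggle.
by case: (psi x); [rewrite (prednK (kin_gt0 Hk x)) ltnW | rewrite (prednK kout_gt0)].
Qed.

Lemma exchanged_sum_card (A : {pred E}) :
  exchanged_sum (mem A) = (-1) ^+ #|A| * exchanged_sum pred0.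
Proof.
rewrite cardE -(exchanged_sum_ext (X := mem (enum A))) => [|e]; last exact: mem_enum.
elim: (enum A) (enum_uniq A) => [_|x s IHs /andP[xs us]].
  by rewrite expr0 mul1r; apply: exchanged_sum_ext.
rewrite (exchanged_sum_ext (Y := predU1 x (mem s))) => [|e]; last by rewrite /= in_cons.
by rewrite exchanged_sum_toggle // IHs // exprS mulN1r mulNr.
Qed.

End ExchangedSums.

Section ReversedStateSum.
Variables (l : nat) (R : numClosedFieldType) (h : ext_form l R).
Arguments h : clear implicits.
Hypothesis Hh : is_ext_form h.
Variables (V E : finType) (src tgt : E -> V).
Hypothesis HG : eulerian_graph src tgt.
Variables (w : E -> bool) (kin kout : E -> nat).
Hypothesis Hk : compatible src tgt w kin kout.
Variables (phi : E -> 'I_l) (c0 : E).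
Local Notation hdw := (hd src tgt w).
Local Notation dg := (deg src tgt).
Local Notation N := (knext src tgt w kin kout).
Local Notation C := (fconnect N c0).
Variables (w' : E -> bool) (kin' kout' : E -> nat).
Hypothesis Hw' : forall e, w' e = (if C e then ~~ w e else w e).
Hypothesis Hout : forall e, ~~ C e -> kin' e = kin e /\ kout' e = kout e.
Hypothesis Hin : forall a, C a -> kout' a = kout (N a) /\ kin' (N a) = kin a.

Local Notation entry' := (entry R src tgt w' kin' kout' phi pred0).
Local Notation entryC := (entry R src tgt w kin kout phi (fun e => C e)).

Definition circuit_slot (v : V) (j : nat) : bool :=
  C (odflt c0 (kinv_in src tgt w kin v j.*2.+1)).

(* After the reversal, the two arcs of C occupying the labels 2j+1 and 2j+2 at v trade places. *)
Lemma entry_rev psi v k : (k < dg v)%N ->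
  entry' psi v k = entryC psi v (pairswap (circuit_slot v) k).
Proof.
move=> lt_k; have [j [b kE]] : exists j (b : bool), k = (b + j.*2)%N.
  by exists k./2, (odd k); rewrite odd_double_half.
subst k; have lt_j : (j.*2.+1 < dg v)%N.
  by move: lt_k; rewrite -(even_halfK (HG v)); case: b; rewrite /= -!mul2n; lia.
have odd_j : odd j.*2.+1 by rewrite /= odd_double.
have [p [<- kp]] := kin_surj Hk odd_j lt_j.
have in_p : kinv_in src tgt w kin (hdw p) j.*2.+1 = Some p by rewrite -kp (kinv_inE Hk).
rewrite /entry /pairswap half_bit_double /circuit_slot in_p /= oddD odd_double addbF.
have CNp := circuit_knext Hk c0 p.
have out_Np := kinv_out_knext Hk in_p.
have in_rev := kinv_in_rev Hk Hw' Hout Hin in_p.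
have out_rev := kinv_out_rev Hk Hw' Hout Hin in_p.
by case: b {lt_k}; case Cp: (C p);
  rewrite /= ?add0n ?add1n /= ?odd_double /= ?in_p ?out_Np ?in_rev ?out_rev /= ?CNp ?Cp.
Qed.

Lemma vfactor_rev psi v : vfactor src tgt h w' kin' kout' phi psi v =
  (-1) ^+ count (circuit_slot v) (iota 0 (dg v)./2) *
  h (dg v) [ffun k : 'I_(dg v) => entryC psi v k].
Proof.
rewrite -(form_pairswap (Hh _).1 (Hh _).2 _ _ (HG v)); congr (h _ _).
by apply/ffunP=> k; rewrite !ffunE -entry_rev.
Qed.

Lemma count_circuit_slot v :
  count (circuit_slot v) (iota 0 (dg v)./2) = #|[pred e | C e & hdw e == v]|.
Proof.
pose g j := odflt c0 (kinv_in src tgt w kin v j.*2.+1).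
have gP j : (j < (dg v)./2)%N -> hdw (g j) = v /\ kin (g j) = j.*2.+1.
  move=> lt_j; have odd_j : odd j.*2.+1 by rewrite /= odd_double.
  have lt_j' : (j.*2.+1 < dg v)%N by rewrite -[dg v](even_halfK (HG v)) ltn_Sdouble.
  by have [p [hp kp]] := kin_surj Hk odd_j lt_j'; rewrite /g -kp -hp (kinv_inE Hk).
have g_enum : perm_eq (map g (iota 0 (dg v)./2)) (enum [pred e | hdw e == v]).
  apply: uniq_perm; rewrite ?enum_uniq //.
    rewrite map_inj_in_uniq ?iota_uniq // => i j; rewrite !mem_iota /= !add0n.
    move=> /gP[_ ki] /gP[_ kj] gij.
    by apply/double_inj/succn_inj; rewrite -ki -kj gij.
  move=> e; rewrite mem_enum inE; apply/mapP/eqP => [[j]|he].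
    by rewrite mem_iota add0n => /andP[_ /gP[he _]] ->.
  have [odd_e lt_e] := kin_range Hk e.
  have kE : ((kin e)./2).*2.+1 = kin e by rewrite -[RHS]odd_double_half odd_e.
  exists (kin e)./2; last by rewrite /g kE -he (kinv_inE Hk).
  by rewrite mem_iota add0n /= -(ltn_Sdouble _ (dg v)./2) kE even_halfK ?(HG v) // -he.
rewrite -[LHS](count_map g (fun e => C e)) (permP g_enum) cardE /enum_mem size_filter.
by rewrite count_filter; apply: eq_count => e; rewrite !inE andbC.
Qed.

Lemma sum_count_circuit_slot :
  (\sum_v count (circuit_slot v) (iota 0 (dg v)./2))%N = #|[pred e | C e]|.
Proof.
rewrite -sum1_card (partition_big hdw predT) //=; apply: eq_bigr => v _.
by rewrite count_circuit_slot -sum1_card; apply: eq_bigl => e; rewrite !inE.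
Qed.

(* The local signs multiply to (-1)^|C|, which is exactly compensated by exchanging e and f
   along C. *)
Lemma state_sum_rev :
  \sum_(psi : {ffun E -> bool}) \prod_v vfactor src tgt h w' kin' kout' phi psi v =
  \sum_(psi : {ffun E -> bool}) \prod_v vfactor src tgt h w kin kout phi psi v.
Proof.
transitivity ((-1) ^+ #|[pred e | C e]| * exchanged_sum h src tgt w kin kout phi (fun e => C e)).
  rewrite /exchanged_sum mulr_sumr; apply: eq_bigr => psi _.
  rewrite (eq_bigr _ (fun v _ => vfactor_rev psi v)) big_split /=.
  by rewrite prodrXr sum_count_circuit_slot.
rewrite (exchanged_sum_ext _ _ _ _ _ _ _ (Y := mem [pred e | C e])) //.
by rewrite (exchanged_sum_card Hh Hk) mulrA -exprMn mulN1r opprK expr1n mul1r.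
Qed.

End ReversedStateSum.

Theorem lemma1 (l : nat) (R : numClosedFieldType) (h : ext_form l R)
  (Hh : is_ext_form h)
  (V E : finType) (src tgt : E -> V) (HG : eulerian_graph src tgt)
  (w : E -> bool) (Hw : eulerian_orientation src tgt w)
  (kin kout : E -> nat) (Hk : compatible src tgt w kin kout)
  (phi : E -> 'I_l)
  (c0 : E) (* the kappa-circuit C is the knext-orbit of the edge c0 *)
  (w' : E -> bool)
  (Hw' : forall e, w' e = (if fconnect (knext src tgt w kin kout) c0 e then ~~ w e else w e))
  (kin' kout' : E -> nat)
  (Hout : forall e, ~~ fconnect (knext src tgt w kin kout) c0 e ->
            kin' e = kin e /\ kout' e = kout e)
  (Hin : forall a, fconnect (knext src tgt w kin kout) c0 a ->
            kout' a = kout (knext src tgt w kin kout a) /\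
            kin' (knext src tgt w kin kout a) = kin a) :
  s_h_phi src tgt h phi w kin kout = s_h_phi src tgt h phi w' kin' kout'.
Proof.
rewrite /s_h_phi (ncirc_rev Hk Hw' Hout Hin).
by rewrite (state_sum_rev Hh HG Hk phi Hw' Hout Hin).
Qed.
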